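(* Let $n=(2k+1)^2$ be an odd square ($k\geq 0$ an integer). (i) There exists a graph $H_1$ of order $n$ such that $\chi_{\mathrm{so}}(H_1)=\sqrt{n}$ and $\chi_{\mathrm{so}}(\overline{H_1})=\sqrt{n}$. (ii) There exists a graph $H_2$ of order $n$ such that $\chi_{\mathrm{so}}(H_2)=n$ and $\chi_{\mathrm{so}}(\overline{H_2})=n$. (iii) For every graph $G$ on $n$ vertices, $2\sqrt{n}\leq \chi_{\mathrm{so}}(G)+\chi_{\mathrm{so}}(\overline{G})\leq 2n$ and $n\leq \chi_{\mathrm{so}}(G)\cdot\chi_{\mathrm{so}}(\overline{G})\leq n^2$, and all four of these inequalities are attained with equality by some graph on $n$ vertices.
   Context: All graphs are finite, simple and undirected; $\overline{G}$ denotes the complement of $G$. A strong odd coloring of a graph $G$ is a proper vertex coloring of $G$ such that for every non-isolated vertex $v$ and every color $c$, either no vertex of the open neighborhood $N_G(v)$ has color $c$, or color $c$ is used on an odd number of vertices of $N_G(v)$; $\chi_{\mathrm{so}}(G)$ is the minimum number of colors in such a coloring. *)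

From mathcomp Require Import all_boot.
Set Implicit Arguments. Unset Strict Implicit. Unset Printing Implicit Defensive.

Record sgraph (n : nat) := SGraph {
  adj : rel 'I_n;
  adj_sym : symmetric adj;
  adj_irr : irreflexive adj }.

Definition compl_adj n (G : sgraph n) : rel 'I_n :=
  fun u v => (u != v) && ~~ adj G u v.

Lemma compl_sym n (G : sgraph n) : symmetric (compl_adj G).
Proof. by move=> u v; rewrite /compl_adj eq_sym adj_sym. Qed.

Lemma compl_irr n (G : sgraph n) : irreflexive (compl_adj G).
Proof. by move=> u; rewrite /compl_adj eqxx. Qed.

Definition compl n (G : sgraph n) : sgraph n :=
  SGraph (@compl_sym n G) (@compl_irr n G).

Definition is_so_coloring n k (G : sgraph n) (f : 'I_n -> 'I_k) : bool :=
  [forall u, forall v, adj G u v ==> (f u != f v)] &&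
  [forall v, [exists u, adj G v u] ==>
     [forall c : 'I_k,
        (#|[set u | adj G v u & f u == c]| == 0)
        || odd #|[set u | adj G v u & f u == c]| ]].

Definition so_colorable n (G : sgraph n) (k : nat) : bool :=
  [exists f : {ffun 'I_n -> 'I_k}, is_so_coloring G f].

Lemma so_colorable_exists n (G : sgraph n) : exists k, so_colorable G k.
Proof.
exists n; apply/existsP; exists [ffun v => v]; apply/andP; split.
  apply/forallP=> u; apply/forallP=> v; apply/implyP=> huv; rewrite !ffunE.
  by apply: contraTneq huv => ->; rewrite adj_irr.
apply/forallP=> v; apply/implyP=> _; apply/forallP=> c.
have : #|[set u | adj G v u & [ffun w => w] u == c]| <= 1.
  rewrite -(cards1 c); apply: subset_leq_card; apply/subsetP=> u.
  by rewrite !inE ffunE => /andP[_ ->].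
by case: #|_| => [|[|]].
Qed.

Definition chi_so n (G : sgraph n) : nat := ex_minn (so_colorable_exists G).

(* Colorings of G and of its complement together separate all vertices, so
   chi_so G * chi_so (compl G) >= n, and AM-GM turns this into the bound on the
   sum; coloring every vertex differently gives the upper bounds.  For the
   extremal graphs, view the n = m^2 vertices (m = 2k+1) as an m x m grid.  The
   union of the m row cliques is strongly odd colored by columns, and its
   complement, the complete multipartite graph with parts of odd size m, by rows;
   so both have chi_so = m.  In the rook graph and in its complement every strong
   odd coloring is injective.  In the rook graph, two vertices of one color would
   be the only neighbours of that color of a common neighbour.  In the complement,
   a color class S containing two vertices of a row lies in that row; a vertex
   off the row sees all of S except at most the cell in its own column, and
   choosing that column inside or outside S forces #|S| - 1 and #|S| both odd
   (the second choice exists as S is not the whole row, m being odd). *)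

From mathcomp Require Import all_boot.
From mathcomp Require Import zify.
Set Implicit Arguments. Unset Strict Implicit. Unset Printing Implicit Defensive.

Section StrongOddColorings.
Variables (n k : nat) (G : sgraph n).
Implicit Types f g : 'I_n -> 'I_k.

Lemma eq_is_so_coloring f g : f =1 g -> is_so_coloring G f = is_so_coloring G g.
Proof.
move=> fg; have nbr_class v c :
    [set u | adj G v u & f u == c] = [set u | adj G v u & g u == c].
  by apply/eq_finset=> u; rewrite fg.
rewrite /is_so_coloring; congr (_ && _).
  by apply/eq_forallb=> u; apply/eq_forallb=> v; rewrite !fg.
by apply/eq_forallb=> v; congr (_ ==> _); apply/eq_forallb=> c; rewrite nbr_class.
Qed.

Lemma so_colorable_of f : is_so_coloring G f -> so_colorable G k.
Proof.
by move=> fG; apply/existsP; exists (finfun f); rewrite (eq_is_so_coloring (ffunE f)).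
Qed.

Lemma so_coloringI f :
    (forall u v, adj G u v -> f u != f v) ->
    (forall v c, (#|[set u | adj G v u & f u == c]| == 0)
                 || odd #|[set u | adj G v u & f u == c]|) ->
  is_so_coloring G f.
Proof.
move=> f_proper f_odd; apply/andP; split.
  by apply/forallP=> u; apply/forallP=> v; apply/implyP/f_proper.
by apply/forallP=> v; apply/implyP=> _; apply/forallP=> c; apply: f_odd.
Qed.

Lemma rainbow_so_coloring f :
    (forall u v, adj G u v -> f u != f v) ->
    (forall v c, #|[set u | adj G v u & f u == c]| <= 1) ->
  is_so_coloring G f.
Proof.
move=> f_proper f_rainbow; apply: so_coloringI => // v c.
by case: #|_| (f_rainbow v c) => [|[|]].
Qed.

Lemma so_coloring_proper f u v : is_so_coloring G f -> adj G u v -> f u != f v.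
Proof. by case/andP=> /forallP/(_ u)/forallP/(_ v)/implyP. Qed.

Lemma so_coloring_nonadj f u v : is_so_coloring G f -> f u = f v -> ~~ adj G u v.
Proof. by move=> fG fuv; apply/negP=> /(so_coloring_proper fG); rewrite fuv eqxx. Qed.

Lemma so_coloring_odd f v c :
    is_so_coloring G f -> [set u | adj G v u & f u == c] != set0 ->
  odd #|[set u | adj G v u & f u == c]|.
Proof.
case/andP=> _ /forallP/(_ v)/implyP f_odd /[dup] /set0Pn[u].
rewrite inE => /andP[vu _]; rewrite -cards_eq0 => /negbTE class_gt0.
have /forallP/(_ c) := f_odd (introT existsP (ex_intro _ u vu)).
by rewrite class_gt0.
Qed.

End StrongOddColorings.

Section ChiSo.
Variables (n : nat) (G : sgraph n).

Lemma chi_so_min k : so_colorable G k -> chi_so G <= k.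
Proof. by rewrite /chi_so; case: ex_minnP => a _; apply. Qed.

Lemma so_colorable_chi_so : so_colorable G (chi_so G).
Proof. by rewrite /chi_so; case: ex_minnP. Qed.

Lemma so_colorable_order : so_colorable G n.
Proof.
apply: (@so_colorable_of _ _ _ id); apply: rainbow_so_coloring => [u v|v c].
  by apply: contraTneq => ->; rewrite adj_irr.
by rewrite -(cards1 c); apply/subset_leq_card/subsetP=> u; rewrite !inE => /andP[].
Qed.

Lemma chi_so_le_order : chi_so G <= n.
Proof. exact/chi_so_min/so_colorable_order. Qed.

Lemma chi_so_eq_order :
  (forall k (f : 'I_n -> 'I_k), is_so_coloring G f -> injective f) -> chi_so G = n.
Proof.
move=> so_inj; apply/eqP; rewrite eqn_leq chi_so_le_order /=.
have /existsP[f /so_inj f_inj] := so_colorable_chi_so.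
by have := leq_card _ f_inj; rewrite !card_ord.
Qed.

End ChiSo.

Lemma order_le_chi_so_mul_compl n (G : sgraph n) : n <= chi_so G * chi_so (compl G).
Proof.
have /existsP[f fG] := so_colorable_chi_so G.
have /existsP[g gG] := so_colorable_chi_so (compl G).
have fg_inj : injective (fun x => (f x, g x)).
  move=> x y [fxy gxy]; apply/eqP; apply: contraT => xy.
  move: (so_coloring_nonadj gG gxy); rewrite /= /compl_adj xy /= negbK.
  by rewrite (negbTE (so_coloring_nonadj fG fxy)).
by have := leq_card _ fg_inj; rewrite card_prod !card_ord.
Qed.

Lemma double_le_add_of_sqr_le_mul m a b : m ^ 2 <= a * b -> 2 * m <= a + b.
Proof.
move=> m2_le_ab; rewrite -(leq_exp2r _ _ (ltn0Sn 1)) expnMn.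
by rewrite (leq_trans _ (nat_AGM2 a b)) // leq_mul2l m2_le_ab orbT.
Qed.

Lemma chi_so_nordhaus_gaddum m (G : sgraph (m ^ 2)) :
  2 * m <= chi_so G + chi_so (compl G) <= 2 * m ^ 2 /\
  m ^ 2 <= chi_so G * chi_so (compl G) <= (m ^ 2) ^ 2.
Proof.
move: (order_le_chi_so_mul_compl G) (chi_so_le_order G) (chi_so_le_order (compl G)).
move: (chi_so G) (chi_so (compl G)) => a b ab_ge a_le b_le.
rewrite ab_ge double_le_add_of_sqr_le_mul // mul2n -addnn leq_add //.
by rewrite -mulnn leq_mul.
Qed.

Record grid (N m : nat) := Grid {
  row : 'I_N -> 'I_m;
  col : 'I_N -> 'I_m;
  cell : 'I_m -> 'I_m -> 'I_N;
  row_cell i j : row (cell i j) = i;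
  col_cell i j : col (cell i j) = j;
  cell_row_col x : cell (row x) (col x) = x }.

Section Grids.
Variables (N m : nat) (g : grid N m).

Definition transpose : grid N m :=
  @Grid N m (col g) (row g) (fun i j => cell g j i)
    (fun i j => col_cell g j i) (fun i j => row_cell g j i) (cell_row_col g).

Lemma row_col_inj x y : row g x = row g y -> col g x = col g y -> x = y.
Proof. by move=> rxy cxy; rewrite -(cell_row_col g x) -(cell_row_col g y) rxy cxy. Qed.

Lemma card_row_set i : #|[set x | row g x == i]| = m.
Proof.
have -> : [set x | row g x == i] = cell g i @: [set: 'I_m].
  apply/setP=> x; rewrite inE; apply/eqP/imsetP => [<-|[j _ ->]].
    by exists (col g x); rewrite ?inE ?cell_row_col.
  exact: row_cell.
rewrite card_imset ?cardsT ?card_ord // => j1 j2 /(congr1 (col g)).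
by rewrite !col_cell.
Qed.

Lemma grid_order : N = m ^ 2.
Proof.
have rc_bij : bijective (fun x => (row g x, col g x)).
  exists (fun ij => cell g ij.1 ij.2) => [x|[i j]]; first exact: cell_row_col.
  by rewrite row_cell col_cell.
by have := bij_eq_card rc_bij; rewrite card_prod !card_ord mulnn.
Qed.

End Grids.

Section SquareGrid.
Variable m : nat.

Lemma ord_sqr_gt0 (x : 'I_(m ^ 2)) : 0 < m.
Proof. by case: m x => // -[]. Qed.

Lemma ltn_divn_sqr (x : 'I_(m ^ 2)) : x %/ m < m.
Proof. by rewrite ltn_divLR ?(ord_sqr_gt0 x) // mulnn. Qed.

Lemma ltn_modn_sqr (x : 'I_(m ^ 2)) : x %% m < m.
Proof. by rewrite ltn_mod (ord_sqr_gt0 x). Qed.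

Lemma ltn_cell_index (i j : 'I_m) : i * m + j < m ^ 2.
Proof.
rewrite -mulnn (@leq_trans (i * m + m)) ?ltn_add2l //.
by rewrite -mulSnr leq_mul2r ltn_ord orbT.
Qed.

Definition square_grid : grid (m ^ 2) m.
Proof.
refine (@Grid _ _ (fun x => Ordinal (ltn_divn_sqr x))
          (fun x => Ordinal (ltn_modn_sqr x))
          (fun i j => Ordinal (ltn_cell_index i j)) _ _ _) => [i j|i j|x].
all: apply: val_inj => /=.
- by rewrite divnMDl ?(leq_ltn_trans _ (ltn_ord i)) // divn_small ?addn0.
- by rewrite modnMDl modn_small.
- by rewrite -divn_eq.
Defined.

End SquareGrid.

Section GraphOfRel.
Variables (N : nat) (r : rel 'I_N).
Hypothesis r_sym : symmetric r.

Definition loopless_adj : rel 'I_N := fun x y => (x != y) && r x y.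

Lemma loopless_sym : symmetric loopless_adj.
Proof. by move=> x y; rewrite /loopless_adj eq_sym r_sym. Qed.

Lemma loopless_irr : irreflexive loopless_adj.
Proof. by move=> x; rewrite /loopless_adj eqxx. Qed.

Definition graph_of_rel : sgraph N := SGraph loopless_sym loopless_irr.

Lemma graph_of_rel_adj x y : adj graph_of_rel x y = (x != y) && r x y.
Proof. by []. Qed.

Lemma compl_graph_of_rel_adj x y :
  adj (compl graph_of_rel) x y = (x != y) && ~~ r x y.
Proof. by rewrite /= /compl_adj graph_of_rel_adj; case: (x != y). Qed.

End GraphOfRel.

Section GridGraphs.
Variables (N m : nat) (g : grid N m).

Definition same_row : rel 'I_N := fun x y => row g x == row g y.

Definition same_line : rel 'I_N :=
  fun x y => (row g x == row g y) || (col g x == col g y).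

Lemma same_row_sym : symmetric same_row.
Proof. by move=> x y; rewrite /same_row eq_sym. Qed.

Lemma same_line_sym : symmetric same_line.
Proof. by move=> x y; rewrite /same_line eq_sym (eq_sym (col g x)). Qed.

Definition row_cliques : sgraph N := graph_of_rel same_row_sym.

Definition rook : sgraph N := graph_of_rel same_line_sym.

Lemma compl_row_cliques_adj x y :
  adj (compl row_cliques) x y = (row g x != row g y).
Proof.
rewrite compl_graph_of_rel_adj /same_row.
by case: (eqVneq x y) => [->|]; rewrite ?eqxx.
Qed.

Lemma compl_rook_adj x y :
  adj (compl rook) x y = (row g x != row g y) && (col g x != col g y).
Proof.
rewrite compl_graph_of_rel_adj /same_line negb_or.
by case: (eqVneq x y) => [->|]; rewrite ?eqxx.
Qed.

Lemma row_cliques_col_coloring : is_so_coloring row_cliques (col g).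
Proof.
apply: rainbow_so_coloring => [x y|v c].
  rewrite graph_of_rel_adj => /andP[xy /eqP rxy].
  by apply: contra xy => /eqP cxy; apply/eqP; exact: row_col_inj rxy cxy.
rewrite -(cards1 (cell g (row g v) c)); apply/subset_leq_card/subsetP=> x.
rewrite !inE graph_of_rel_adj => /andP[/andP[_ /eqP rvx] /eqP cx].
by apply/eqP; apply: (row_col_inj (g := g)); rewrite ?row_cell ?col_cell.
Qed.

Lemma compl_row_cliques_row_coloring :
  odd m -> is_so_coloring (compl row_cliques) (row g).
Proof.
move=> m_odd; apply: so_coloringI => [x y|v c]; first by rewrite compl_row_cliques_adj.
case: (eqVneq c (row g v)) => [->|cv].
  apply/orP; left; rewrite cards_eq0; apply/eqP; apply/setP=> x.
  by rewrite !inE compl_row_cliques_adj eq_sym; case: eqP.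
suff -> : [set x | adj (compl row_cliques) v x & row g x == c] = [set x | row g x == c].
  by rewrite card_row_set m_odd orbT.
apply/setP=> x; rewrite !inE compl_row_cliques_adj.
by case: (eqVneq (row g x) c) => [->|]; rewrite ?andbF // eq_sym cv.
Qed.

Lemma chi_so_row_cliques :
  odd m -> chi_so row_cliques = m /\ chi_so (compl row_cliques) = m.
Proof.
move=> m_odd; have := order_le_chi_so_mul_compl row_cliques.
have := chi_so_min (so_colorable_of row_cliques_col_coloring).
have := chi_so_min (so_colorable_of (compl_row_cliques_row_coloring m_odd)).
move: (chi_so row_cliques) (chi_so (compl row_cliques)) => a b.
rewrite (grid_order g); nia.
Qed.

Lemma rook_so_coloring_inj k (f : 'I_N -> 'I_k) : is_so_coloring rook f -> injective f.
Proof.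
move=> fG u v fuv; apply: contraTeq isT => uv.
have /norP[ruv cuv] : ~~ same_line u v.
  by have := so_coloring_nonadj fG fuv; rewrite graph_of_rel_adj uv.
have line_inj x y : f x = f y -> same_line x y -> x = y.
  move=> fxy xy; apply/eqP; apply: contraT => x_neq_y.
  by have := so_coloring_nonadj fG fxy; rewrite graph_of_rel_adj x_neq_y xy.
pose w := cell g (row g u) (col g v).
have wu : w != u by apply: contraNneq cuv => <-; rewrite col_cell.
have wv : w != v by apply: contraNneq ruv => <-; rewrite row_cell.
have nbr_class : [set x | adj rook w x & f x == f u] = [set u; v].
  apply/setP=> x; rewrite !inE graph_of_rel_adj /same_line row_cell col_cell.
  apply/idP/idP => [/andP[/andP[_ /orP[rx|cx]] /eqP fx]|/orP[]/eqP->].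
  - by rewrite (line_inj x u fx) ?eqxx // same_line_sym /same_line rx.
  - rewrite (line_inj x v (etrans fx fuv)) ?eqxx ?orbT //.
    by rewrite same_line_sym /same_line cx orbT.
  - by rewrite !eqxx !andbT.
  - by rewrite fuv !eqxx orbT !andbT.
have : odd #|[set u; v]|.
  rewrite -nbr_class (so_coloring_odd fG) // nbr_class.
  by apply/set0Pn; exists u; rewrite !inE eqxx.
by rewrite cards2 uv.
Qed.

End GridGraphs.

Section ComplRookColorings.
Variables (N m : nat) (g : grid N m) (G : sgraph N).
Hypothesis adjG : forall x y, adj G x y = (row g x != row g y) && (col g x != col g y).
Variables (k : nat) (f : 'I_N -> 'I_k).
Hypothesis fG : is_so_coloring G f.

Lemma color_class_in_row u v x :
  u != v -> row g u = row g v -> f u = f v -> f x = f u -> row g x = row g u.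
Proof.
move=> uv ruv fuv fx; apply/eqP; apply: contraT => rxu.
have rxv : row g x != row g v by rewrite -ruv.
have := so_coloring_nonadj fG fx; rewrite adjG rxu negbK => /eqP cxu.
have := so_coloring_nonadj fG (etrans fx fuv); rewrite adjG rxv negbK => /eqP cxv.
by move: uv; rewrite (row_col_inj ruv (etrans (esym cxu) cxv)) eqxx.
Qed.

Lemma nbr_color_class_off_row u w :
    (forall x, f x = f u -> row g x = row g u) -> row g w != row g u ->
  [set x | adj G w x & f x == f u] = [set x | f x == f u] :\ cell g (row g u) (col g w).
Proof.
move=> class_row rwu; apply/setP=> x; rewrite !inE adjG.
case: (eqVneq (f x) (f u)) => [/(class_row x) rxu|]; rewrite ?andbF // !andbT.
by rewrite -[x in RHS](cell_row_col g) rxu (can_eq (col_cell g _)) rwu eq_sym.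
Qed.

Lemma compl_rook_same_color_row_neq u v :
  odd m -> u != v -> f u = f v -> row g u != row g v.
Proof.
move=> m_odd uv fuv; apply/negP=> /eqP ruv.
have cuv : col g u != col g v by apply: contraNneq uv => /(row_col_inj ruv) ->.
have class_row x := @color_class_in_row u v x uv ruv fuv.
set S := [set x | f x == f u]; set r := row g u.
(* col u and col v are distinct, so one of them is a row index other than r *)
pose r' := if col g u != r then col g u else col g v.
have r'r : r' != r by rewrite /r'; case: ifP => // /negbFE/eqP <-; rewrite eq_sym.
have odd_class y : S :\ cell g r y != set0 -> odd #|S :\ cell g r y|.
  move=> nz; have := nbr_color_class_off_row (w := cell g r' y) class_row.
  rewrite row_cell col_cell => /(_ r'r) class_eq.
  by rewrite -class_eq (so_coloring_odd fG) // class_eq.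
have S_even : ~~ odd #|S|.
  have u_cell : cell g r (col g u) = u by rewrite cell_row_col.
  rewrite (cardsD1 u) inE eqxx /= negbK -u_cell odd_class // u_cell.
  by apply/set0Pn; exists v; rewrite !inE eq_sym uv fuv eqxx.
have [y yS] : exists y, cell g r y \notin S.
  apply/existsP; rewrite -negb_forall; apply: contra S_even => /forallP row_S.
  suff -> : S = [set x | row g x == r] by rewrite card_row_set.
  apply/setP=> x; rewrite !inE; apply/eqP/eqP => [/(class_row x) //|rxr].
  by have := row_S (col g x); rewrite -rxr cell_row_col inE => /eqP.
have : odd #|S :\ cell g r y|.
  apply: odd_class; apply/set0Pn; exists u; rewrite !inE eqxx andbT.
  by apply: contraNneq yS => <-; rewrite inE.
by rewrite (cardsD1 (cell g r y)) (negbTE yS) in S_even => /(negP S_even).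
Qed.

End ComplRookColorings.

Lemma compl_rook_so_coloring_inj N m (g : grid N m) k (f : 'I_N -> 'I_k) :
  odd m -> is_so_coloring (compl (rook g)) f -> injective f.
Proof.
move=> m_odd fG u v fuv; apply: contraTeq isT => uv.
pose g' := transpose g.
have adj_transpose x y :
    adj (compl (rook g)) x y = (row g' x != row g' y) && (col g' x != col g' y).
  by rewrite compl_rook_adj andbC.
have /negbTE row_uv := compl_rook_same_color_row_neq (compl_rook_adj g) fG m_odd uv fuv.
have /negbTE col_uv : col g u != col g v :=
  compl_rook_same_color_row_neq adj_transpose fG m_odd uv fuv.
have := so_coloring_nonadj fG fuv.
by rewrite compl_rook_adj negb_and !negbK row_uv col_uv.
Qed.

Theorem theorem4p6 (k : nat) :
  let n := (2 * k + 1) ^ 2 in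
  (* (i) *)
  (exists H1 : sgraph n,
      chi_so H1 = 2 * k + 1 /\ chi_so (compl H1) = 2 * k + 1) /\
  (* (ii) *)
  (exists H2 : sgraph n, chi_so H2 = n /\ chi_so (compl H2) = n) /\
  (* (iii) bounds *)
  (forall G : sgraph n,
      2 * (2 * k + 1) <= chi_so G + chi_so (compl G) <= 2 * n /\
      n <= chi_so G * chi_so (compl G) <= n ^ 2) /\
  (* (iii) each bound is attained *)
  (exists G : sgraph n, chi_so G + chi_so (compl G) = 2 * (2 * k + 1)) /\
  (exists G : sgraph n, chi_so G + chi_so (compl G) = 2 * n) /\
  (exists G : sgraph n, chi_so G * chi_so (compl G) = n) /\
  (exists G : sgraph n, chi_so G * chi_so (compl G) = n ^ 2).
Proof.
move=> n; set m := 2 * k + 1.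
have m_odd : odd m by rewrite oddD oddM.
pose g := square_grid m.
have [H1 H1c] := chi_so_row_cliques g m_odd.
have H2 : chi_so (rook g) = n.
  by apply: chi_so_eq_order => ? f; apply: rook_so_coloring_inj.
have H2c : chi_so (compl (rook g)) = n.
  by apply: chi_so_eq_order => ? f; apply: compl_rook_so_coloring_inj.
split; first by exists (row_cliques g).
split; first by exists (rook g).
split; first exact: chi_so_nordhaus_gaddum.
split; first by exists (row_cliques g); rewrite H1 H1c addnn mul2n.
split; first by exists (rook g); rewrite H2 H2c addnn mul2n.
split; first by exists (row_cliques g); rewrite H1 H1c mulnn.
by exists (rook g); rewrite H2 H2c mulnn.
Qed.
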